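(* Let $\alpha,\beta\in\{-1,0,1\}$, and let $\tilde{C}\in\{0,1\}^{\tilde{K}\times n}$ and $\hat{C}\in\{0,1\}^{\hat{K}\times n}$ be cost matrices of two ordinal objectives on the same $n$ elements. Then the matrix \[ A=\begin{pmatrix}\alpha\,\tilde{C}\\ \beta\,\hat{C}\end{pmatrix} \] is totally unimodular.
   Context: An ordinal objective on $n$ elements with $K$ categories $\eta_1\prec\dots\prec\eta_K$ is given by an assignment $o:\{1,\dots,n\}\to\{\eta_1,\dots,\eta_K\}$; its cost matrix $C\in\{0,1\}^{K\times n}$ has $C_{ji}=1$ if $j\le k$ where $o(i)=\eta_k$, and $C_{ji}=0$ otherwise (each column consists of ones in rows $1,\dots,k$ for some $k\ge1$, followed by zeros). $\tilde{C}$ and $\hat{C}$ are such matrices for assignments $\tilde{o}$ (with $\tilde{K}$ categories) and $\hat{o}$ (with $\hat{K}$ categories). A matrix is totally unimodular if every square submatrix has determinant in $\{-1,0,1\}$. *)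

From mathcomp Require Import all_boot all_order all_algebra.
Set Implicit Arguments. Unset Strict Implicit. Unset Printing Implicit Defensive.
Import GRing.Theory Num.Theory.
Local Open Scope ring_scope.

(* An ordinal objective on n elements with K categories eta_1 < ... < eta_K:
   o : 'I_n -> 'I_K, where o i = k (0-indexed) means o(i) = eta_(k+1). *)
Definition cost_matrix (K n : nat) (o : 'I_n -> 'I_K) : 'M[int]_(K, n) :=
  \matrix_(j < K, i < n) (if (j <= o i)%N then 1 else 0).

Definition totally_unimodular (m n : nat) (A : 'M[int]_(m, n)) : Prop :=
  forall (k : nat) (f : 'I_k -> 'I_m) (g : 'I_k -> 'I_n),
    injective f -> injective g ->
    \det (mxsub f g A) \in [:: -1; 0; 1].

From mathcomp Require Import all_boot all_order all_algebra.
From mathcomp Require Import zify.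
Set Implicit Arguments. Unset Strict Implicit. Unset Printing Implicit Defensive.
Import Order.TTheory GRing.Theory Num.Theory.
Local Open Scope ring_scope.

(* Placing the rows of the first cost matrix in reverse order before those of
   the second, every column of the stacked matrix has its ones on a contiguous
   block of rows; up to the row scalings alpha and beta it is an interval
   matrix. Interval matrices are totally unimodular: let p0 be a row of
   smallest key and c0, among the intervals containing it, one ending first.
   Subtracting column c0 from the other columns containing p0 leaves intervals
   that miss p0, so row p0 has a single nonzero entry, and expanding along it
   leaves a smaller interval matrix. *)

Definition sgvals (R : pzRingType) : seq R := [:: -1; 0; 1].

Lemma sgvals0 (R : pzRingType) : 0 \in sgvals R.
Proof. by rewrite !inE eqxx orbT. Qed.

Lemma sgvals1 (R : pzRingType) : 1 \in sgvals R.
Proof. by rewrite !inE eqxx !orbT. Qed.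

Lemma sgvalsM (R : pzRingType) (x y : R) :
  x \in sgvals R -> y \in sgvals R -> x * y \in sgvals R.
Proof.
rewrite !inE => /or3P [] /eqP-> /or3P [] /eqP->;
  by rewrite ?mulN1r ?mulr0 ?mul0r ?mulr1 ?mul1r ?opprK ?oppr0 eqxx ?orbT.
Qed.

Lemma sgvals_sign (R : pzRingType) (n : nat) : (-1) ^+ n \in sgvals R.
Proof. by rewrite -signr_odd; case: odd; rewrite ?expr1 ?expr0 ?inE ?eqxx ?orbT. Qed.

Section Determinants.
Variable R : comPzRingType.

Lemma expand_det_row_single n (A : 'M[R]_n) i0 j0 :
  (forall j, j != j0 -> A i0 j = 0) -> \det A = A i0 j0 * cofactor A i0 j0.
Proof.
move=> A0; rewrite (expand_det_row _ i0) (bigD1 j0) //= big1 ?addr0 //.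
by move=> j /A0->; rewrite mul0r.
Qed.

Lemma det_add_col_multiple n (A : 'M[R]_n) j0 (d : 'I_n -> R) : d j0 = 0 ->
  \det (\matrix_(i, j) (A i j + d j * A i j0)) = \det A.
Proof.
move=> dj0; pose T : 'M[R]_n := \matrix_(l, j) ((l == j)%:R + d j * (l == j0)%:R).
have -> : \matrix_(i, j) (A i j + d j * A i j0) = A *m T.
  apply/matrixP => i j; rewrite !mxE.
  under eq_bigr do rewrite mxE mulrDr.
  rewrite big_split /= (bigD1 j) //= big1 ?addr0; last first.
    by move=> l /negbTE; rewrite eq_sym => ->; rewrite mulr0.
  rewrite eqxx mulr1 (bigD1 j0) //= big1 ?addr0; last first.
    by move=> l /negbTE->; rewrite mulr0 mulr0.
  by rewrite eqxx mulr1 mulrC.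
have detT : \det T = 1.
  rewrite -det_tr (expand_det_row_single _ (i0 := j0) (j0 := j0)); last first.
    by move=> l l_j0; rewrite !mxE (negbTE l_j0) dj0 mul0r addr0.
  rewrite /cofactor !mxE eqxx dj0 mul0r addr0 mul1r addnn -signr_odd odd_double mul1r.
  rewrite -[RHS](det1 R n.-1); congr (\det _); apply/matrixP => a b.
  rewrite !mxE (inj_eq lift_inj) eq_sym [lift _ _ == _]eq_sym.
  by rewrite (negbTE (neq_lift _ _)) mulr0 addr0.
by rewrite det_mulmx detT mulr1.
Qed.

End Determinants.

Section IntervalMatrix.
Variables (R : comPzRingType) (disp : Order.disp_t) (T : orderType disp).
Local Open Scope order_scope.

(* Half-open intervals, so that over an arbitrary order the difference of two
   intervals with a common left part is again an interval. *)
Definition interval_mx m n (key : 'I_m -> T) (lo hi : 'I_n -> T) : 'M[R]_(m, n) :=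
  \matrix_(i, j) ((lo j < key i) && (key i <= hi j))%:R.

Lemma mxsub_interval_mx m n k k' (f : 'I_k -> 'I_m) (g : 'I_k' -> 'I_n)
    (key : 'I_m -> T) (lo hi : 'I_n -> T) :
  mxsub f g (interval_mx key lo hi) = interval_mx (key \o f) (lo \o g) (hi \o g).
Proof. by apply/matrixP => i j; rewrite !mxE. Qed.

Lemma det_interval_mx k (key lo hi : 'I_k -> T) :
  \det (interval_mx key lo hi) \in sgvals R.
Proof.
elim: k key lo hi => [|k IHk] key lo hi; first by rewrite det_mx00 sgvals1.
pose p0 := [arg min_(i < ord0) key i].
have key_min i : key p0 <= key i by rewrite /p0; case: arg_minP => // i0 _; apply.
pose S := [pred j | (lo j < key p0) && (key p0 <= hi j)].
have [j1 Sj1 | S0] := pickP S; last first.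
  rewrite (expand_det_row_single _ (i0 := p0) (j0 := ord0)) => [|j _].
    by rewrite mxE [_ && _]S0 mul0r sgvals0.
  by rewrite mxE [_ && _]S0.
pose c0 := [arg min_(j < j1 in S) hi j].
have [Sc0 hi_min] : c0 \in S /\ forall j, j \in S -> hi c0 <= hi j.
  by rewrite /c0; case: arg_minP.
pose lo' j := if (j \in S) && (j != c0) then hi c0 else lo j.
have -> : \det (interval_mx key lo hi) = \det (interval_mx key lo' hi).
  pose d j : R := - ((j \in S) && (j != c0))%:R.
  rewrite -(det_add_col_multiple _ (d := d) (j0 := c0)); last first.
    by rewrite /d eqxx andbF oppr0.
  congr (\det _); apply/matrixP => i j; rewrite !mxE /d /lo'.
  case: ifP => [/andP [Sj _] | _]; last by rewrite oppr0 mul0r addr0.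
  (* all keys are >= key p0, so the lower bounds of j and c0 are inactive *)
  have /andP [loj _] := Sj; have /andP [loc0 _] := Sc0.
  rewrite (lt_le_trans loj (key_min i)) (lt_le_trans loc0 (key_min i)) /= mulN1r.
  have [ki_le | hi_lt] := leP (key i) (hi c0).
    by rewrite (le_trans ki_le (hi_min j Sj)) subrr.
  by rewrite subr0.
rewrite (expand_det_row_single _ (i0 := p0) (j0 := c0)) => [|j j_c0]; last first.
  rewrite mxE /lo' j_c0 andbT; case: ifP => [_ | Sj]; last by rewrite [_ && _]Sj.
  by have /andP [_ kle] := Sc0; rewrite (le_gtF kle).
rewrite /cofactor !mxE /lo' eqxx andbF [_ && _]Sc0 mul1r.
apply: sgvalsM; first exact: sgvals_sign.
have -> : row' p0 (col' c0 (interval_mx key lo' hi)) =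
          interval_mx (key \o lift p0) (lo' \o lift c0) (hi \o lift c0).
  by apply/matrixP => i j; rewrite !mxE.
exact: IHk.
Qed.

End IntervalMatrix.

Lemma interval_mx_totally_unimodular (disp : Order.disp_t) (T : orderType disp)
    m n (key : 'I_m -> T) (lo hi : 'I_n -> T) :
  totally_unimodular (interval_mx int key lo hi).
Proof. by move=> k f g _ _; rewrite mxsub_interval_mx; apply: det_interval_mx. Qed.

Lemma totally_unimodular_diag_mulmx m n (d : 'rV[int]_m) (B : 'M[int]_(m, n)) :
  (forall i, d 0 i \in sgvals int) -> totally_unimodular B ->
  totally_unimodular (diag_mx d *m B).
Proof.
move=> d_sg B_tu k f g f_inj g_inj.
have -> : mxsub f g (diag_mx d *m B) = diag_mx (\row_i d 0 (f i)) *m mxsub f g B.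
  by apply/matrixP => i j; rewrite !mul_diag_mx !mxE.
rewrite det_mulmx det_diag; apply: sgvalsM; last exact: B_tu f_inj g_inj.
apply: (big_ind (fun x => x \in sgvals int)); [exact: sgvals1 | exact: sgvalsM |].
by move=> i _; rewrite mxE.
Qed.

Theorem theorem1 (n Kt Kh : nat) (ot : 'I_n -> 'I_Kt) (oh : 'I_n -> 'I_Kh)
  (alpha beta : int) (halpha : alpha \in [:: -1; 0; 1])
  (hbeta : beta \in [:: -1; 0; 1]) :
  totally_unimodular
    (col_mx (alpha *: cost_matrix ot) (beta *: cost_matrix oh)).
Proof.
pose sg : 'rV[int]_(Kt + Kh) :=
  \row_r match split r with inl _ => alpha | inr _ => beta end.
(* Column c has its ones exactly at the keys in ]-ot c - 1, oh c + 1]. *)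
pose key (r : 'I_(Kt + Kh)) : int :=
  match split r with inl j => - (j : nat)%:Z | inr j => (j.+1)%:Z end.
pose lo c : int := - (ot c : nat)%:Z - 1.
pose hi c : int := (oh c).+1%:Z.
have -> : col_mx (alpha *: cost_matrix ot) (beta *: cost_matrix oh) =
          diag_mx sg *m interval_mx int key lo hi.
  apply/matrixP => r c; rewrite mul_diag_mx !mxE /key /lo /hi.
  case: splitP => j _; rewrite !mxE.
    rewrite [in RHS](_ : _ && _ = (j <= ot c)%N); first by case: leqP.
    by apply/andP/idP => [[] | ?]; lia.
  rewrite [in RHS](_ : _ && _ = (j <= oh c)%N); first by case: leqP.
  by apply/andP/idP => [[] | ?]; lia.
apply: totally_unimodular_diag_mulmx; last exact: interval_mx_totally_unimodular.
by move=> r; rewrite mxE; case: split.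
Qed.
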